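(* Let $G$ be a ride sharing game (as in the context), let $\vec a$ be a strategy profile and let $i,j$ be players. Suppose (H1) all players have a common set of strategies $\mathcal{A}_0$; (H2) $N\le w$; (H3) the seat allocation is first-fit; (H4) the strategy update $(\vec a,a_j,i)$ is no-vehicle-loss. Then $c_i(a_j,\vec a_{-i})\le c_j(\vec a)$.
   Context: A ride sharing game consists of players $\mathcal{N}=\{1,\ldots,N\}$; vehicles $\mathcal{M}=\{1,\ldots,M\}$ each with seating capacity $w\in\mathbb{N}_{>0}$; times $\mathcal{T}=\{1,\ldots,T\}$; a directed simple graph $\mathcal{G}=(\mathcal{V},\mathcal{E})$ where additionally every node has a loop. Strategies are paths $a_i=(v_1,e_1,\ldots,e_{T-1},v_T)$ in $\mathcal{G}$ from a set $\mathcal{A}_i$, edge $e_t$ traversed in period $(t,t+1)$; $\vec a$ is a profile and $(b_i,\vec a_{-i})$ the profile where $i$ switches to $b_i$; this switch is called the strategy update $(\vec a,b_i,i)$. An allocation map $\mu(i,t,\vec a)\in\mathcal{M}\cup\{\emptyset\}$ assigns players to vehicles; vehicles move with their players; $s_m(t,\vec a)$ is the number of players in vehicle $m$ during $(t,t+1)$ (taken to be $0$ for a player with no vehicle). $N_{et}(\vec a)$, $M_{et}(\vec a)$ are the numbers of players and vehicles on edge $e$ during $(t,t+1)$. Costs: $c_e(w,s)\ge0$ is monotone decreasing in $s$ for $s<w$ and monotone increasing for $s\ge w$; $c_i(\vec a)=\sum_{e_t\in a_i}c_e(w,s_{\mu(i,t,\vec a)}(t,\vec a))$. The allocation consists of a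 path allocation (which edges vehicles move on) and a seat allocation (assigning players on an edge to the vehicles there); the seat allocation is first-fit if players on an edge are put into the vehicle with smallest index there until it is full, then the next, etc. A strategy update $(\vec a,b_i,i)$ is no-vehicle-loss if $M_{et}(b_i,\vec a_{-i})\neq0$ for every $e_t\in b_i$ with $M_{et}(\vec a)>0$. *)

From mathcomp Require Import all_boot all_order all_algebra.
Set Implicit Arguments. Unset Strict Implicit. Unset Printing Implicit Defensive.
Import Order.TTheory GRing.Theory Num.Theory.

(* Times are 'I_T (0-based: index k stands for time k+1).
   Periods (t,t+1) are indexed by 'I_T.-1. *)
Lemma period_lt (T : nat) (t : 'I_T.-1) : t.+1 < T.
Proof. case: T t => [[]//|n t]; exact: (ltn_ord t). Qed.

Definition psrc (T : nat) (t : 'I_T.-1) : 'I_T := Ordinal (ltnW (period_lt t)).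
Definition pdst (T : nat) (t : 'I_T.-1) : 'I_T := Ordinal (period_lt t).

(* A (candidate) path: sequence of T vertices; for a simple graph the edges are
   determined by consecutive vertices. *)
Definition path_t (T : nat) (V : finType) := {ffun 'I_T -> V}.

Definition pedge (T : nat) (V : finType) (p : path_t T V) (t : 'I_T.-1) : V * V :=
  (p (psrc t), p (pdst t)).

Definition is_gpath (T : nat) (V : finType) (E : rel V) (p : path_t T V) : Prop :=
  forall t : 'I_T.-1, E (p (psrc t)) (p (pdst t)).

Definition profile_t (N T : nat) (V : finType) := {ffun 'I_N -> path_t T V}.

Definition upd (N T : nat) (V : finType) (a : profile_t N T V) (i : 'I_N)
  (b : path_t T V) : profile_t N T V :=
  [ffun k => if k == i then b else a k].

(* A ride sharing game.  The allocation map mu and the path allocation vpath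
   (the path each vehicle moves on) are part of the data of the game. *)
Record rsgame (R : numDomainType) := RSGame {
  rsN : nat;
  rsM : nat;
  rsw : nat;
  rsw_gt0 : (0 < rsw)%N;
  rsT : nat;
  rsV : finType;
  rsE : rel rsV;                   (* directed simple graph (edges = pairs) *)
  rsE_loop : forall v, rsE v v;
  rsA : 'I_rsN -> {set path_t rsT rsV};
  rsA_path : forall k p, p \in rsA k -> is_gpath rsE p;
  rscost : rsV * rsV -> nat -> nat -> R;
  rscost_ge0 : forall e s, (0 <= rscost e rsw s)%R;
  rscost_dec : forall e s, (s < rsw)%N -> (rscost e rsw s.+1 <= rscost e rsw s)%R;
  rscost_inc : forall e s, (rsw <= s)%N -> (rscost e rsw s <= rscost e rsw s.+1)%R;
  (* allocation map mu(i,t,a) in M \cup {emptyset} *)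
  rsmu : profile_t rsN rsT rsV -> 'I_rsN -> 'I_rsT.-1 -> option 'I_rsM;
  rsvpath : profile_t rsN rsT rsV -> 'I_rsM -> path_t rsT rsV;
  rsvpath_ok : forall a : profile_t rsN rsT rsV, (forall k, a k \in rsA k) ->
      forall m, is_gpath rsE (rsvpath a m);
  rsmu_moves : forall a : profile_t rsN rsT rsV, (forall k, a k \in rsA k) ->
      forall k t m, rsmu a k t = Some m -> pedge (rsvpath a m) t = pedge (a k) t
}.

Arguments rsA {R} r _.
Arguments rsmu {R} r _ _ _.
Arguments rsvpath {R} r _ _.
Arguments rscost {R} r _ _ _.

Section Defs.
Variables (R : numDomainType) (G : rsgame R).

Definition profile := profile_t (rsN G) (rsT G) (rsV G).
Definition is_profile (a : profile) : Prop := forall k, a k \in rsA G k.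

Definition occupancy (a : profile) (m : 'I_(rsM G)) (t : 'I_(rsT G).-1) : nat :=
  #|[set k | rsmu G a k t == Some m]|.

(* s_{mu(i,t,a)}(t,a), taken to be 0 when i has no vehicle *)
Definition load (a : profile) (i : 'I_(rsN G)) (t : 'I_(rsT G).-1) : nat :=
  if rsmu G a i t is Some m then occupancy a m t else 0.

Definition cost (a : profile) (i : 'I_(rsN G)) : R :=
  (\sum_(t < (rsT G).-1) rscost G (pedge (a i) t) (rsw G) (load a i t))%R.

Definition Nplayers (a : profile) (e : rsV G * rsV G) (t : 'I_(rsT G).-1) : nat :=
  #|[set k | pedge (a k) t == e]|.
Definition Mvehicles (a : profile) (e : rsV G * rsV G) (t : 'I_(rsT G).-1) : nat :=
  #|[set m | pedge (rsvpath G a m) t == e]|.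

(* First-fit seat allocation: on each edge e during (t,t+1), the players there
   fill the vehicles there in increasing index order, each up to capacity w:
   vehicle m on e receives min(w, N_et - w * #{vehicles on e with index < m})
   players (truncated subtraction). *)
Definition first_fit : Prop :=
  forall a, is_profile a -> forall (t : 'I_(rsT G).-1) (m : 'I_(rsM G)),
    let e := pedge (rsvpath G a m) t in
    occupancy a m t =
      minn (rsw G) (Nplayers a e t -
        rsw G * #|[set m' : 'I_(rsM G) | (pedge (rsvpath G a m') t == e) && (m' < m)%N]|).

Definition no_vehicle_loss (a : profile) (b : path_t (rsT G) (rsV G))
  (i : 'I_(rsN G)) : Prop :=
  forall t : 'I_(rsT G).-1, (0 < Mvehicles a (pedge b t) t)%N ->
    Mvehicles (upd a i b) (pedge b t) t != 0%N.

End Defs.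

(* Fix a period and let e be the edge that player j uses in a.  If no
   vehicle is on e, then j rides in no vehicle and pays c_e(w, 0).  Otherwise
   vehicles are still on e after i switches to a_j (no vehicle loss), and since
   N <= w first-fit puts all players on e into the first of them; so i then
   rides with every player on e, at least as many as were on e before, hence
   at least as many as rode with j.  Either way i's load is at least j's and at
   most w, and c_e is decreasing below w. *)
From mathcomp Require Import all_boot all_order all_algebra.
Import Order.TTheory GRing.Theory Num.Theory.
Local Open Scope ring_scope.

Section RideSharing.
Context {R : numDomainType} {G : rsgame R}.
Implicit Types (b : profile G) (t : 'I_(rsT G).-1) (k : 'I_(rsN G)).

Lemma rscost_le (e : rsV G * rsV G) (x y : nat) :
  (x <= y <= rsw G)%N -> rscost G e (rsw G) y <= rscost G e (rsw G) x.
Proof.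
case/andP=> /subnKC <-; elim: (y - x)%N => [|d IH] Hw; first by rewrite addn0.
rewrite addnS in Hw *; apply: le_trans (rscost_dec _ Hw) (IH (ltnW Hw)).
Qed.

Lemma upd_is_profile b i (p : path_t (rsT G) (rsV G)) :
  is_profile b -> p \in rsA G i -> is_profile (upd b i p).
Proof. by move=> Hb Hp k; rewrite ffunE; case: (k =P i) => [->|_]. Qed.

Lemma Nplayers_le_rsN b e t : (Nplayers b e t <= rsN G)%N.
Proof. by rewrite -[rsN G]card_ord max_card. Qed.

Lemma Nplayers_upd b i (p : path_t (rsT G) (rsV G)) t :
  (Nplayers b (pedge p t) t <= Nplayers (upd b i p) (pedge p t) t)%N.
Proof.
by apply/subset_leq_card/subsetP => k; rewrite !inE ffunE; case: (k =P i).
Qed.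

Lemma riders_on_vehicle_edge b m t : is_profile b ->
  [set k | rsmu G b k t == Some m]
    \subset [set k | pedge (b k) t == pedge (rsvpath G b m) t].
Proof. by move=> Hb; apply/subsetP => k; rewrite !inE => /eqP/(rsmu_moves Hb)->. Qed.

Lemma load_le_Nplayers b k t :
  is_profile b -> (load b k t <= Nplayers b (pedge (b k) t) t)%N.
Proof.
rewrite /load; case Hk: (rsmu G b k t) => [m|] // Hb.
by rewrite -(rsmu_moves Hb Hk) subset_leq_card // riders_on_vehicle_edge.
Qed.

Lemma load_no_vehicle b k t : is_profile b ->
  Mvehicles b (pedge (b k) t) t = 0%N -> load b k t = 0%N.
Proof.
rewrite /load; case Hk: (rsmu G b k t) => [m|] // Hb /eqP.
by rewrite cards_eq0 => /eqP/setP/(_ m); rewrite !inE (rsmu_moves Hb Hk) eqxx.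
Qed.

Lemma load_first_fit b k t :
  is_profile b -> first_fit G -> (rsN G <= rsw G)%N ->
  Mvehicles b (pedge (b k) t) t != 0%N ->
  load b k t = Nplayers b (pedge (b k) t) t.
Proof.
set e := pedge (b k) t => Hb Hff HN.
rewrite cards_eq0 => /set0Pn[m0]; rewrite inE => Hm0.
case: (arg_minnP (P := fun m => pedge (rsvpath G b m) t == e) val Hm0) => m1 /eqP He Hmin.
(* m1 is the first vehicle on e, so first-fit seats min(w, N_et) = N_et players in it. *)
have Hocc : occupancy b m1 t = Nplayers b e t.
  rewrite (Hff b Hb t m1) /= He.
  have -> : [set m' | (pedge (rsvpath G b m') t == e) && (m' < m1)%N] = set0.
    apply/setP => m'; rewrite !inE; apply/negbTE/andP => -[/Hmin].
    by rewrite leqNgt => /negbTE->.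
  rewrite cards0 muln0 subn0.
  exact/minn_idPr/(leq_trans (Nplayers_le_rsN _ _ _) HN).
have Hriders : [set k' | rsmu G b k' t == Some m1] = [set k' | pedge (b k') t == e].
  have := riders_on_vehicle_edge b m1 t Hb; rewrite He => Hsub.
  by apply/eqP; rewrite eqEcard Hsub -[X in (_ <= X)%N]/(occupancy b m1 t) Hocc /=.
have : k \in [set k' | pedge (b k') t == e] by rewrite inE.
by rewrite -Hriders inE /load => /eqP->.
Qed.

End RideSharing.

Theorem lemma2 (R : realDomainType) (G : rsgame R) (A0 : {set path_t (rsT G) (rsV G)})
  (a : profile G) (i j : 'I_(rsN G)) :
  is_profile a ->
  (forall k, rsA G k = A0) ->
  (rsN G <= rsw G)%N ->
  first_fit G ->
  no_vehicle_loss a (a j) i ->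
  cost (upd a i (a j)) i <= cost a j.
Proof.
move=> Ha HA HN Hff Hnvl; set b : profile G := upd a i (a j).
have Hb : is_profile b by apply: upd_is_profile; rewrite // HA -(HA j).
have Hbi : b i = a j by rewrite ffunE eqxx.
rewrite /cost Hbi; apply: ler_sum => t _; apply: rscost_le.
have Hload_w : (load b i t <= rsw G)%N.
  exact: leq_trans (load_le_Nplayers _ _ _ Hb) (leq_trans (Nplayers_le_rsN _ _ _) HN).
rewrite Hload_w andbT.
have [Hnone|Hvehicle] := eqVneq (Mvehicles a (pedge (a j) t) t) 0%N.
  by rewrite (load_no_vehicle _ _ _ Ha Hnone).
rewrite (load_first_fit _ _ _ Hb Hff HN) Hbi ?Hnvl ?lt0n //.
exact: leq_trans (load_le_Nplayers _ _ _ Ha) (Nplayers_upd _ _ _ _).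
Qed.
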